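(* Let $F$ be a field of characteristic zero, $n,m$ natural numbers, $1\le u\le n$ and $1\le j\le n+m$. Let $l=\sum c_{\alpha,\beta}e^{\alpha}x^{\beta}\partial_j$ be a nonzero element of $W(n,m)$ (finite sum, $c_{\alpha,\beta}\in F$) such that every $\alpha=(a_1,\dots,a_n)$ with some $c_{\alpha,\beta}\neq0$ has $a_u\neq0$. Then $[\partial_u,l]\neq0$.
   Context: $W(n,m)$ has basis $e^{\alpha}x^{\beta}\partial_i$ ($\alpha\in\mathbb Z^n$, $\beta\in\mathbb Z^{n+m}$, $1\le i\le n+m$), realized as vector fields $f\partial_i$ with $f$ in the commutative algebra with basis $e^{\alpha}x^{\beta}$ (multiplication adding exponents), $\partial_i(e^{\alpha}x^{\beta})=a_ie^{\alpha}x^{\beta}+b_ie^{\alpha}x^{\beta-\epsilon_i}$ with $a_i:=0$ for $i>n$, and bracket $[f\partial_i,g\partial_j]=f\partial_i(g)\partial_j-g\partial_j(f)\partial_i$. *)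

From HB Require Import structures.
From mathcomp Require Import all_boot all_order all_algebra.
Set Implicit Arguments. Unset Strict Implicit. Unset Printing Implicit Defensive.
Import Order.TTheory GRing.Theory Num.Theory.
Local Open Scope ring_scope.

(* A monomial e^alpha x^beta is encoded by (alpha, beta) with
   alpha : Z^n, beta : Z^(n+m).  An element of W(n,m) is represented as a
   formal finite sum (a list) of terms  c e^alpha x^beta d_i, i : 'I_(n+m);
   its coefficients are obtained by summing the list entries with the same
   basis vector, so two lists denote the same element iff they have the same
   coefficient function. *)

Section W.
Variables (F : fieldType) (n m : nat).

Definition mon := ({ffun 'I_n -> int} * {ffun 'I_(n + m) -> int})%type.

Definition Aelt := seq (F * mon).
Definition Welt := seq ((F * mon) * 'I_(n + m)).

Definition mulmon (p q : mon) : mon :=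
  ([ffun k => p.1 k + q.1 k], [ffun k => p.2 k + q.2 k]).

Definition mon1 : mon := ([ffun => 0], [ffun => 0]).

(* a_i, with a_i := 0 for i > n (i.e. for indices in the x-only part) *)
Definition acoef (i : 'I_(n + m)) (p : mon) : int :=
  match split i with inl k => p.1 k | inr _ => 0 end.
Definition bcoef (i : 'I_(n + m)) (p : mon) : int := p.2 i.
Definition shiftdown (i : 'I_(n + m)) (p : mon) : mon :=
  (p.1, [ffun k => p.2 k - (k == i)%:Z]).

(* d_i (c e^alpha x^beta) = c a_i e^alpha x^beta + c b_i e^alpha x^(beta - eps_i) *)
Definition dterm (i : 'I_(n + m)) (t : F * mon) : Aelt :=
  [:: (t.1 * (acoef i t.2)%:~R, t.2); (t.1 * (bcoef i t.2)%:~R, shiftdown i t.2)].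

(* [f d_i, g d_j] = f d_i(g) d_j - g d_j(f) d_i on terms *)
Definition brterm (s t : (F * mon) * 'I_(n + m)) : Welt :=
  let: (f, i) := s in let: (g, j) := t in
  [seq ((f.1 * r.1, mulmon f.2 r.2), j) | r <- dterm i g] ++
  [seq ((- (g.1 * r.1), mulmon g.2 r.2), i) | r <- dterm j f].

Definition bracket (l1 l2 : Welt) : Welt :=
  flatten [seq brterm s t | s <- l1, t <- l2].

Definition coefW (l : Welt) (p : mon) (i : 'I_(n + m)) : F :=
  \sum_(t <- l | (t.1.2 == p) && (t.2 == i)) t.1.1.

Definition Wnonzero (l : Welt) : Prop := exists p i, coefW l p i != 0.

Definition partial (i : 'I_(n + m)) : Welt := [:: ((1, mon1), i)].

End W.

From HB Require Import structures.
From mathcomp Require Import all_boot all_order all_algebra.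
From mathcomp Require Import zify ring.
Import Order.TTheory GRing.Theory Num.Theory.
Local Open Scope ring_scope.

(* For l = sum_q c_q e^alpha x^beta d_j (q = (alpha, beta)), the coefficient of
   e^alpha x^beta d_j in [d_i, l] is c_q a_i(q) + c_{q + eps_i} (b_i(q) + 1).
   Choosing q in the support of l with b_i(q) maximal kills the second term, and
   for i = u the first is nonzero because a_u(q) is a nonzero integer and F has
   characteristic zero. *)

Lemma intr_eq0_pchar0 (F : idomainType) (z : int) :
  [pchar F] =i pred0 -> (z%:~R == 0 :> F) = (z == 0).
Proof.
move/pcharf0P=> natr_eq0; case: z => k.
  exact: natr_eq0.
by rewrite NegzE intrN oppr_eq0; apply: natr_eq0.
Qed.

Lemma exists_argmax_seq {d} {T : orderType d} {A : eqType} (f : A -> T)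
    {s : seq A} {x0 : A} :
  x0 \in s -> exists2 x, x \in s & forall y, y \in s -> (f y <= f x)%O.
Proof.
case: s => [//|a s] _; elim: s a => [|b s IH] a.
  by exists a => [|y]; rewrite inE // => /eqP ->.
have [x xs x_max] := IH b.
have [fax | fxa] := leP (f a) (f x).
  exists x => [|y]; first by rewrite inE xs orbT.
  by rewrite inE => /predU1P[-> | /x_max].
exists a => [|y]; first exact: mem_head.
by rewrite inE => /predU1P[-> // | /x_max/le_trans/(_ (ltW fxa))].
Qed.

Section WittAlgebra.
Context {F : fieldType} {n m : nat}.
Implicit Types (l : Welt F n m) (p q : mon n m) (i j : 'I_(n + m)).

Definition shiftup i p : mon n m := (p.1, [ffun k => p.2 k + (k == i)%:Z]).

Lemma shiftdown_eq i p q : (shiftdown i p == q) = (p == shiftup i q).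
Proof.
case: p q => a b [a' b']; rewrite /shiftup /shiftdown /=.
apply/eqP/eqP => [[<- <-] | [-> ->]]; congr pair; apply/ffunP => k;
  by rewrite !ffunE ?subrK ?addrK.
Qed.

Lemma acoef_shiftup i j q : acoef j (shiftup i q) = acoef j q.
Proof. by []. Qed.

Lemma bcoef_shiftup i q : bcoef i (shiftup i q) = bcoef i q + 1.
Proof. by rewrite /bcoef ffunE eqxx. Qed.

Lemma mul1mon p : mulmon (mon1 n m) p = p.
Proof.
by case: p => a b; congr pair; apply/ffunP => k; rewrite !ffunE add0r.
Qed.

Lemma acoef_mon1 i : acoef i (mon1 n m) = 0.
Proof. by rewrite /acoef; case: split => k; rewrite ?ffunE. Qed.

Lemma acoef_lshift (u : 'I_n) p : acoef (lshift m u) p = p.1 u.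
Proof. by rewrite /acoef -/(unsplit (inl u)) unsplitK. Qed.

Lemma coefW_cat l1 l2 q j : coefW (l1 ++ l2) q j = coefW l1 q j + coefW l2 q j.
Proof. exact: big_cat. Qed.

Lemma coefW_brterm_partial i (c : F) p j0 q j :
  coefW (brterm ((1, mon1 n m), i) ((c, p), j0)) q j =
  (if (p == q) && (j0 == j) then c * (acoef i p)%:~R else 0) +
  (if (p == shiftup i q) && (j0 == j) then c * (bcoef i p)%:~R else 0).
Proof.
rewrite /coefW big_cat /= !big_cons big_nil /= !mul1mon -shiftdown_eq.
rewrite acoef_mon1 /bcoef !ffunE !mulr0 !oppr0 !mul1r.
by do 4![case: ifP => _]; rewrite ?addr0 ?add0r.
Qed.

Lemma coefW_bracket_partial i l q j :
  coefW (bracket (partial F i) l) q j =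
  coefW l q j * (acoef i q)%:~R
  + coefW l (shiftup i q) j * (bcoef i (shiftup i q))%:~R.
Proof.
rewrite /bracket /partial /= cats0.
elim: l => [|[[c p] j0] l IH]; first by rewrite /coefW !big_nil !mul0r addr0.
rewrite map_cons -cat1s flatten_cat coefW_cat IH coefW_brterm_partial.
rewrite /coefW !big_cons /=.
have [pq | _] := eqVneq p q; have [pi | _] := eqVneq p (shiftup i q);
  case: (j0 == j); rewrite /= ?pi ?pq ?acoef_shiftup; ring.
Qed.

Definition suppW l j := [seq q <- [seq t.1.2 | t <- l] | coefW l q j != 0].

Lemma coefW_neq0 {l q j} :
  coefW l q j != 0 -> exists2 t, t \in l & (t.1.2 == q) && (t.2 == j).
Proof.
move=> nz_q; apply/hasP; apply: contraNT nz_q => /hasPn no_term; apply/eqP.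
by rewrite /coefW big_seq_cond big1 // => t /andP[/no_term/negbTE ->].
Qed.

Lemma mem_suppW l q j : (q \in suppW l j) = (coefW l q j != 0).
Proof.
rewrite mem_filter andb_idr // => /coefW_neq0[t tl /andP[/eqP <- _]].
exact: map_f.
Qed.

Lemma coefW_shiftup_max i l q j :
  (forall p, p \in suppW l j -> bcoef i p <= bcoef i q) ->
  coefW l (shiftup i q) j = 0.
Proof.
move=> q_max; apply/eqP; apply: contraT; rewrite -mem_suppW => /q_max.
by rewrite bcoef_shiftup; lia.
Qed.

End WittAlgebra.

Theorem lemma3 (F : fieldType) (charF0 : [pchar F] =i pred0) (n m : nat)
  (u : 'I_n) (j : 'I_(n + m)) (l : Welt F n m) :
  (* l = sum c_{alpha,beta} e^alpha x^beta d_j : only d_j occurs *)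
  all (fun t => t.2 == j) l ->
  Wnonzero l ->
  (forall p : mon n m, coefW l p j != 0 -> p.1 u != 0) ->
  Wnonzero (bracket (@partial F n m (lshift m u)) l).
Proof.
move=> /allP l_j [p0 [j0 nz_p0]] a_u_neq0.
have j0_j : j0 = j.
  by have [t /l_j/eqP <- /andP[_ /eqP ->]] := coefW_neq0 nz_p0.
rewrite j0_j -mem_suppW in nz_p0.
have [p] := exists_argmax_seq (bcoef (lshift m u)) nz_p0.
rewrite mem_suppW => nz_p p_max.
exists p, j; rewrite coefW_bracket_partial coefW_shiftup_max // mul0r addr0.
by rewrite mulf_neq0 // acoef_lshift intr_eq0_pchar0 // a_u_neq0.
Qed.
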